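(* Let $\gamma_1,\gamma_2\in[0,1)$, $\beta\ge0$, let $q_1^\star$ be the unique solution of $b_1(q_1)=0$ and $q_2^\star$ the unique solution of $b_2(q_1^\star,q_2)=0$, and let $\pi_2^\star$ be the policy induced by $q_2^\star$. Suppose $l_1^\star,l_2^\star:\mathcal S\times\mathcal A\to\mathbb R$ with $l_2^\star\ge0$ satisfy, for all functions $h$ on $\mathcal S\times\mathcal A$, $$\langle l_2^\star,(I-\gamma_2P_2^{\pi_2^\star})h\rangle_{\rho_2}=\langle q_2^\star,h\rangle_{\rho_2},\qquad \langle l_1^\star,(I-\gamma_1P_1^\mu)h\rangle_{\rho_1}=\beta\langle q_1^\star,h\rangle_{\rho_1}+\langle l_2^\star,(I-\Pi_\mu)h\rangle_{\rho_2}.$$ Then $(q_1^\star,q_2^\star,l_1^\star,l_2^\star)$ is a saddle point of $\mathcal L^\beta_{\rm coup}$, i.e. $\mathcal L^\beta_{\rm coup}(q_1^\star,q_2^\star,l_1,l_2)\le \mathcal L^\beta_{\rm coup}(q_1^\star,q_2^\star,l_1^\star,l_2^\star)\le\mathcal L^\beta_{\rm coup}(q_1,q_2,l_1^\star,l_2^\star)$ for all $q_1,q_2,l_1,l_2$, and for every $(q_1,q_2)$, $$\mathcal L^\beta_{\rm coup}(q_1,q_2,l_1^\star,l_2^\star)-\mathcal L^\beta_{\rm coup}(q_1^\star,q_2^\star,l_1^\star,l_2^\star)\ge\frac\beta2\|q_1-q_1^\star\|_{\rho_1}^2+\frac12\|q_2-q_2^\star\|_{\rho_2}^2.$$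
   Context: Setup: $\mathcal S$ and $\mathcal A$ are finite sets; functions on $\mathcal S\times\mathcal A$ are real vectors. For a probability distribution $\rho$ on $\mathcal S\times\mathcal A$, $\langle f,h\rangle_\rho=\sum_{s,a}\rho(s,a)f(s,a)h(s,a)$, $\|f\|_\rho^2=\langle f,f\rangle_\rho$; $\rho_1,\rho_2$ are probability distributions on $\mathcal S\times\mathcal A$. $P_1,P_2$ are transition kernels. $\mu$ is an anchor policy, $g:\mathcal S\to\mathbb R$, $C\in\mathbb R$, $u_g^\star$ a given function on $\mathcal S\times\mathcal A$. $(\Pi_\mu q)(s,a):=\sum_{a'}\mu(a'\mid s)q(s,a')$; $(P_1^\mu q)(s,a):=\sum_{s'}P_1(s'\mid s,a)\sum_{a'}\mu(a'\mid s')q(s',a')$; for $v:\mathcal S\to\mathbb R$, $(P_2v)(s,a):=\sum_{s'}P_2(s'\mid s,a)v(s')$; for a policy $\pi$, $(P_2^\pi h)(s,a):=\sum_{s'}P_2(s'\mid s,a)\sum_{a'}\pi(a'\mid s')h(s',a')$. With $\tau_2>0$ and full-support $\pi_{2,\rm ref}$, $\Omega(q)(s):=\tau_2\log\sum_a\pi_{2,\rm ref}(a\mid s)e^{q(s,a)/\tau_2}$, and the policy induced by $q$ is $\pi_q(a\mid s)=\pi_{2,\rm ref}(a\mid s)e^{q(s,a)/\tau_2}/\sum_{a'}\pi_{2,\rm ref}(a'\mid s)e^{q(s,a')/\tau_2}$. Residuals $b_1(q_1):=u_g^\star+\gamma_1P_1^\mu q_1-q_1$, $b_2(q_1,q_2):=(I-\Pi_\mu)q_1+g+C+\gamma_2P_2\Omega(q_2)-q_2$.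 Coupled Lagrangian: $\mathcal L^\beta_{\rm coup}(q_1,q_2,l_1,l_2):=\frac\beta2\|q_1\|_{\rho_1}^2+\frac12\|q_2\|_{\rho_2}^2+\langle l_1,b_1(q_1)\rangle_{\rho_1}+\langle l_2,b_2(q_1,q_2)\rangle_{\rho_2}$. *)

From HB Require Import structures.
From mathcomp Require Import all_boot all_order all_algebra.
From mathcomp Require Import reals sequences exp.
Set Implicit Arguments. Unset Strict Implicit. Unset Printing Implicit Defensive.
Import Order.TTheory GRing.Theory Num.Theory.
Local Open Scope ring_scope.

Section Defs.
Variables (R : realType) (S A : finType).

Definition ip (rho f h : S -> A -> R) : R :=
  \sum_(s : S) \sum_(a : A) rho s a * f s a * h s a.
Definition nrm2 (rho f : S -> A -> R) : R := ip rho f f.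

Definition is_dist (rho : S -> A -> R) : Prop :=
  (forall s a, 0 <= rho s a) /\ \sum_(s : S) \sum_(a : A) rho s a = 1.
(* transition kernel: P s a s' = P(s' | s, a) *)
Definition is_kernel (P : S -> A -> S -> R) : Prop :=
  forall s a, (forall s', 0 <= P s a s') /\ \sum_(s' : S) P s a s' = 1.
(* policy: pi s a = pi(a | s) *)
Definition is_policy (pi : S -> A -> R) : Prop :=
  forall s, (forall a, 0 <= pi s a) /\ \sum_(a : A) pi s a = 1.

Definition PiMu (mu : S -> A -> R) (q : S -> A -> R) : S -> A -> R :=
  fun s _ => \sum_(a' : A) mu s a' * q s a'.
Definition Ppol (P : S -> A -> S -> R) (pi : S -> A -> R) (q : S -> A -> R)
  : S -> A -> R :=
  fun s a => \sum_(s' : S) P s a s' * \sum_(a' : A) pi s' a' * q s' a'.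
Definition Pv (P : S -> A -> S -> R) (v : S -> R) : S -> A -> R :=
  fun s a => \sum_(s' : S) P s a s' * v s'.

Definition Omega (tau : R) (piref : S -> A -> R) (q : S -> A -> R) : S -> R :=
  fun s => tau * ln (\sum_(a : A) piref s a * expR (q s a / tau)).
Definition pol_of (tau : R) (piref : S -> A -> R) (q : S -> A -> R)
  : S -> A -> R :=
  fun s a => piref s a * expR (q s a / tau) /
             \sum_(a' : A) piref s a' * expR (q s a' / tau).

Definition b1 (ug : S -> A -> R) (gamma1 : R) (P1 : S -> A -> S -> R)
  (mu : S -> A -> R) (q1 : S -> A -> R) : S -> A -> R :=
  fun s a => ug s a + gamma1 * Ppol P1 mu q1 s a - q1 s a.

Definition b2 (mu : S -> A -> R) (g : S -> R) (C gamma2 : R)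
  (P2 : S -> A -> S -> R) (tau2 : R) (piref : S -> A -> R)
  (q1 q2 : S -> A -> R) : S -> A -> R :=
  fun s a => (q1 s a - PiMu mu q1 s a) + g s + C
             + gamma2 * Pv P2 (Omega tau2 piref q2) s a - q2 s a.

Definition Lcoup (beta : R) (rho1 rho2 : S -> A -> R)
  (ug : S -> A -> R) (gamma1 : R) (P1 : S -> A -> S -> R) (mu : S -> A -> R)
  (g : S -> R) (C gamma2 : R) (P2 : S -> A -> S -> R) (tau2 : R)
  (piref : S -> A -> R) (q1 q2 l1 l2 : S -> A -> R) : R :=
  beta / 2 * nrm2 rho1 q1 + 1 / 2 * nrm2 rho2 q2
  + ip rho1 l1 (b1 ug gamma1 P1 mu q1)
  + ip rho2 l2 (b2 mu g C gamma2 P2 tau2 piref q1 q2).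

End Defs.

(* The Lagrangian vanishes on the residual terms at (q1s, q2s), so there it does
   not depend on the multipliers.  For the lower bound write d_i = q_i - q_is:
   b1 is affine, so b1(q1) = -(I - gamma1 P1^mu) d1; b2 is convex in q2 because
   Omega is a log-sum-exp whose gradient at q2s is the induced policy (Jensen
   for expR), so with l2s >= 0 the l2s-term is bounded below by its
   linearisation.  The two adjoint equations turn these linear terms into
   -beta <q1s, d1> - <q2s, d2>, which cancel the cross terms of
   ||q_is + d_i||^2 and leave the quadratic gap. *)

From HB Require Import structures.
From mathcomp Require Import all_boot all_order all_algebra.
From mathcomp Require Import reals sequences exp.
From mathcomp Require Import ring lra.
Import Order.TTheory GRing.Theory Num.Theory.
Local Open Scope ring_scope.

Lemma expR_mean_le (R : realType) (I : finType) (w x : I -> R) :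
  (forall i, 0 <= w i) -> \sum_i w i = 1 ->
  expR (\sum_i w i * x i) <= \sum_i w i * expR (x i).
Proof.
move=> w_ge0 w_sum1; set m := \sum_i w i * x i.
have tangent i : w i * (expR m * (1 + (x i - m))) <= w i * expR (x i).
  have -> : expR (x i) = expR m * expR (x i - m) by rewrite -expRD addrC subrK.
  by rewrite ler_wpM2l // ler_wpM2l ?expR_ge0 // expR_ge1Dx.
apply: le_trans (ler_sum _ (fun i _ => tangent i)).
rewrite (eq_bigr (fun i => expR m * (w i + w i * x i - m * w i))); last first.
  by move=> i _; ring.
by rewrite -mulr_sumr !big_split /= sumrN -mulr_sumr w_sum1 -/m mulr1 addrK mulr1.
Qed.

Lemma Omega_subgradient (R : realType) (S A : finType) (tau : R)
    (piref q qs : S -> A -> R) (s : S) :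
  0 < tau -> (forall s a, 0 < piref s a) ->
  \sum_a pol_of tau piref qs s a * (q s a - qs s a)
  <= Omega tau piref q s - Omega tau piref qs s.
Proof.
move=> tau_gt0 piref_gt0.
case: (pickP (@predT A)) => [a0 _ | A_empty]; last first.
  by rewrite /Omega !big_pred0 // subrr.
set w := fun a => piref s a * expR (qs s a / tau).
set Z := \sum_a w a.
have w_gt0 a : 0 < w a by rewrite mulr_gt0 ?expR_gt0.
have Z_gt0 : 0 < Z.
  by rewrite /Z (bigD1 a0) //= ltr_pwDl ?sumr_ge0 // => a _; exact: ltW.
have pol_ge0 a : 0 <= pol_of tau piref qs s a.
  exact: divr_ge0 (ltW (w_gt0 a)) (ltW Z_gt0).
have pol_sum1 : \sum_a pol_of tau piref qs s a = 1.
  by rewrite -mulr_suml mulfV ?gt_eqF.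
have := @expR_mean_le _ _ _ (fun a => (q s a - qs s a) / tau) pol_ge0 pol_sum1.
set M := \sum_a _ * expR _ => jensen.
have M_gt0 : 0 < M by apply: lt_le_trans jensen; exact: expR_gt0.
have ZM : \sum_a piref s a * expR (q s a / tau) = Z * M.
  rewrite /M mulr_sumr; apply: eq_bigr => a _.
  rewrite /pol_of -/w -/Z mulrA mulrCA mulfV ?gt_eqF // mulr1 -mulrA -expRD.
  by rewrite -mulrDl addrC subrK.
have mean_le : \sum_a pol_of tau piref qs s a * ((q s a - qs s a) / tau) <= ln M.
  by rewrite -ler_expR lnK ?posrE.
have -> : \sum_a pol_of tau piref qs s a * (q s a - qs s a)
        = tau * \sum_a pol_of tau piref qs s a * ((q s a - qs s a) / tau).
  rewrite mulr_sumr; apply: eq_bigr => a _.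
  by rewrite mulrCA [tau * _]mulrC divfK ?gt_eqF.
by rewrite /Omega -/Z ZM lnM ?posrE // mulrDr addrAC subrr add0r ler_pM2l.
Qed.

Section InnerProduct.
Set Implicit Arguments. Unset Strict Implicit.
Variables (R : realType) (S A : finType).
Implicit Types (rho f h q : S -> A -> R).

Lemma eq_ipr rho f h1 h2 :
  (forall s a, h1 s a = h2 s a) -> ip rho f h1 = ip rho f h2.
Proof. by move=> eqh; apply: eq_bigr => s _; apply: eq_bigr => a _; rewrite eqh. Qed.

Lemma ip_eq0r rho f h : (forall s a, h s a = 0) -> ip rho f h = 0.
Proof. by move=> h0; rewrite /ip big1 // => s _; rewrite big1 // => a _; rewrite h0 mulr0. Qed.

Lemma ipBr rho f h1 h2 :
  ip rho f (fun s a => h1 s a - h2 s a) = ip rho f h1 - ip rho f h2.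
Proof.
rewrite /ip -sumrB; apply: eq_bigr => s _; rewrite -sumrB.
by apply: eq_bigr => a _; rewrite mulrBr.
Qed.

Lemma ler_ipr rho f h1 h2 :
  (forall s a, 0 <= rho s a) -> (forall s a, 0 <= f s a) ->
  (forall s a, h1 s a <= h2 s a) -> ip rho f h1 <= ip rho f h2.
Proof.
move=> rho_ge0 f_ge0 leh; apply: ler_sum => s _; apply: ler_sum => a _.
by rewrite ler_wpM2l ?mulr_ge0.
Qed.

Lemma nrm2_ge0 rho f : (forall s a, 0 <= rho s a) -> 0 <= nrm2 rho f.
Proof.
move=> rho_ge0; apply: sumr_ge0 => s _; apply: sumr_ge0 => a _.
by rewrite -mulrA mulr_ge0 // -expr2 sqr_ge0.
Qed.

Lemma nrm2_expand rho q qs :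
  nrm2 rho q = nrm2 rho qs + nrm2 rho (fun s a => q s a - qs s a)
               + 2 * ip rho qs (fun s a => q s a - qs s a).
Proof.
rewrite /nrm2 /ip mulr_sumr -!big_split /=; apply: eq_bigr => s _.
by rewrite mulr_sumr -!big_split /=; apply: eq_bigr => a _; ring.
Qed.

End InnerProduct.

Section Residuals.
Set Implicit Arguments. Unset Strict Implicit.
Variables (R : realType) (S A : finType).
Variables (P : S -> A -> S -> R) (mu : S -> A -> R).
Implicit Types (q : S -> A -> R).

Lemma PpolB q q' s a :
  Ppol P mu (fun s a => q s a - q' s a) s a = Ppol P mu q s a - Ppol P mu q' s a.
Proof.
rewrite /Ppol -sumrB; apply: eq_bigr => s' _; rewrite -mulrBr -sumrB.
by congr (_ * _); apply: eq_bigr => a' _; rewrite mulrBr.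
Qed.

Lemma PiMuB q q' s a :
  PiMu mu (fun s a => q s a - q' s a) s a = PiMu mu q s a - PiMu mu q' s a.
Proof. by rewrite /PiMu -sumrB; apply: eq_bigr => a' _; rewrite mulrBr. Qed.

Lemma b1B (ug : S -> A -> R) (gamma : R) q q' s a :
  b1 ug gamma P mu q' s a - b1 ug gamma P mu q s a
  = (q s a - q' s a) - gamma * Ppol P mu (fun s a => q s a - q' s a) s a.
Proof. by rewrite /b1 PpolB; ring. Qed.

Lemma Pv_Omega_subgradient (tau : R) (piref : S -> A -> R) q qs s a :
  (forall s a s', 0 <= P s a s') -> 0 < tau -> (forall s a, 0 < piref s a) ->
  Ppol P (pol_of tau piref qs) (fun s a => q s a - qs s a) s a
  <= Pv P (Omega tau piref q) s a - Pv P (Omega tau piref qs) s a.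
Proof.
move=> P_ge0 tau_gt0 piref_gt0; rewrite /Ppol /Pv -sumrB.
apply: ler_sum => s' _; rewrite -mulrBr ler_wpM2l //.
exact: Omega_subgradient.
Qed.

Lemma b2B_ge (g : S -> R) (C gamma tau : R) (piref : S -> A -> R) q1 q1' q2 q2' s a :
  (forall s a s', 0 <= P s a s') -> 0 <= gamma -> 0 < tau ->
  (forall s a, 0 < piref s a) ->
  ((q1 s a - q1' s a) - PiMu mu (fun s a => q1 s a - q1' s a) s a)
  - ((q2 s a - q2' s a)
     - gamma * Ppol P (pol_of tau piref q2') (fun s a => q2 s a - q2' s a) s a)
  <= b2 mu g C gamma P tau piref q1 q2 s a - b2 mu g C gamma P tau piref q1' q2' s a.
Proof.
move=> P_ge0 gamma_ge0 tau_gt0 piref_gt0.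
have := ler_wpM2l gamma_ge0 (Pv_Omega_subgradient q2 q2' s a P_ge0 tau_gt0 piref_gt0).
rewrite /b2 PiMuB; lra.
Qed.

End Residuals.

Section CoupledSaddle.
Set Implicit Arguments. Unset Strict Implicit.
Variables (R : realType) (S A : finType).
Variables (rho1 rho2 : S -> A -> R) (P1 P2 : S -> A -> S -> R).
Variables (mu piref : S -> A -> R) (g : S -> R) (C : R) (ug : S -> A -> R).
Variables (tau2 gamma1 gamma2 beta : R) (q1s q2s l1s l2s : S -> A -> R).
Hypothesis rho2_ge0 : forall s a, 0 <= rho2 s a.
Hypothesis P2_ge0 : forall s a s', 0 <= P2 s a s'.
Hypothesis gamma2_ge0 : 0 <= gamma2.
Hypothesis tau2_gt0 : 0 < tau2.
Hypothesis piref_gt0 : forall s a, 0 < piref s a.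
Hypothesis l2s_ge0 : forall s a, 0 <= l2s s a.
Hypothesis b1_q1s : forall s a, b1 ug gamma1 P1 mu q1s s a = 0.
Hypothesis b2_q2s : forall s a, b2 mu g C gamma2 P2 tau2 piref q1s q2s s a = 0.
Hypothesis l2s_adjoint : forall h : S -> A -> R,
  ip rho2 l2s (fun s a => h s a - gamma2 * Ppol P2 (pol_of tau2 piref q2s) h s a)
  = ip rho2 q2s h.
Hypothesis l1s_adjoint : forall h : S -> A -> R,
  ip rho1 l1s (fun s a => h s a - gamma1 * Ppol P1 mu h s a)
  = beta * ip rho1 q1s h + ip rho2 l2s (fun s a => h s a - PiMu mu h s a).

Let L := Lcoup beta rho1 rho2 ug gamma1 P1 mu g C gamma2 P2 tau2 piref.

Lemma Lcoup_at_solution l1 l2 :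
  L q1s q2s l1 l2 = beta / 2 * nrm2 rho1 q1s + 1 / 2 * nrm2 rho2 q2s.
Proof. by rewrite /L /Lcoup (ip_eq0r _ _ b1_q1s) (ip_eq0r _ _ b2_q2s) !addr0. Qed.

Lemma Lcoup_gap_ge q1 q2 :
  L q1 q2 l1s l2s - L q1s q2s l1s l2s >=
  beta / 2 * nrm2 rho1 (fun s a => q1 s a - q1s s a)
  + 1 / 2 * nrm2 rho2 (fun s a => q2 s a - q2s s a).
Proof.
set d1 := fun s a => q1 s a - q1s s a; set d2 := fun s a => q2 s a - q2s s a.
have dual1 : ip rho1 l1s (b1 ug gamma1 P1 mu q1)
             = - ip rho1 l1s (fun s a => d1 s a - gamma1 * Ppol P1 mu d1 s a).
  rewrite -(eq_ipr _ _ (b1B P1 mu ug gamma1 q1 q1s)) (ipBr _ _ (b1 _ _ _ _ q1s)).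
  by rewrite (ip_eq0r _ _ b1_q1s) sub0r opprK.
have dual2 : ip rho2 l2s (fun s a => d1 s a - PiMu mu d1 s a)
             - ip rho2 l2s (fun s a => d2 s a
                 - gamma2 * Ppol P2 (pol_of tau2 piref q2s) d2 s a)
             <= ip rho2 l2s (b2 mu g C gamma2 P2 tau2 piref q1 q2).
  rewrite -ipBr -[X in _ <= X]subr0 -(ip_eq0r rho2 l2s b2_q2s) -ipBr.
  by apply: ler_ipr => // s a; apply: b2B_ge.
have := l1s_adjoint d1; have := l2s_adjoint d2.
rewrite /L /Lcoup (nrm2_expand rho1 q1 q1s) (nrm2_expand rho2 q2 q2s).
rewrite (ip_eq0r _ _ b1_q1s) (ip_eq0r _ _ b2_q2s) dual1 -/d1 -/d2; lra.
Qed.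

End CoupledSaddle.

Theorem theorem3p3 (R : realType) (S A : finType)
  (rho1 rho2 : S -> A -> R) (P1 P2 : S -> A -> S -> R)
  (mu piref : S -> A -> R) (g : S -> R) (C : R) (ug : S -> A -> R)
  (tau2 gamma1 gamma2 beta : R)
  (q1s q2s l1s l2s : S -> A -> R) :
  is_dist rho1 -> is_dist rho2 ->
  is_kernel P1 -> is_kernel P2 ->
  is_policy mu -> is_policy piref -> (forall s a, 0 < piref s a) ->
  0 < tau2 ->
  0 <= gamma1 < 1 -> 0 <= gamma2 < 1 -> 0 <= beta ->
  (* q1* solves b1(q1) = 0 *)
  (forall s a, b1 ug gamma1 P1 mu q1s s a = 0) ->
  (* q2* solves b2(q1*, q2) = 0 *)
  (forall s a, b2 mu g C gamma2 P2 tau2 piref q1s q2s s a = 0) ->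
  (forall s a, 0 <= l2s s a) ->
  (forall h : S -> A -> R,
     ip rho2 l2s (fun s a => h s a
        - gamma2 * Ppol P2 (pol_of tau2 piref q2s) h s a)
     = ip rho2 q2s h) ->
  (forall h : S -> A -> R,
     ip rho1 l1s (fun s a => h s a - gamma1 * Ppol P1 mu h s a)
     = beta * ip rho1 q1s h
       + ip rho2 l2s (fun s a => h s a - PiMu mu h s a)) ->
  let L := Lcoup beta rho1 rho2 ug gamma1 P1 mu g C gamma2 P2 tau2 piref in
  (forall q1 q2 l1 l2 : S -> A -> R,
     L q1s q2s l1 l2 <= L q1s q2s l1s l2s /\
     L q1s q2s l1s l2s <= L q1 q2 l1s l2s) /\
  (forall q1 q2 : S -> A -> R,
     L q1 q2 l1s l2s - L q1s q2s l1s l2s >=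
     beta / 2 * nrm2 rho1 (fun s a => q1 s a - q1s s a)
     + 1 / 2 * nrm2 rho2 (fun s a => q2 s a - q2s s a)).
Proof.
move=> [rho1_ge0 _] [rho2_ge0 _] _ P2_kernel _ _ piref_gt0 tau2_gt0 _
  /andP[gamma2_ge0 _] beta_ge0 b1_q1s b2_q2s l2s_ge0 l2s_adjoint l1s_adjoint L.
have P2_ge0 s a s' : 0 <= P2 s a s' by case: (P2_kernel s a) => ->.
have gap := Lcoup_gap_ge rho2_ge0 P2_ge0 gamma2_ge0 tau2_gt0 piref_gt0 l2s_ge0
  b1_q1s b2_q2s l2s_adjoint l1s_adjoint.
split=> // q1 q2 l1 l2; split; first by rewrite /L !Lcoup_at_solution.
have := gap q1 q2; have := nrm2_ge0 (fun s a => q1 s a - q1s s a) rho1_ge0.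
have := nrm2_ge0 (fun s a => q2 s a - q2s s a) rho2_ge0.
rewrite -/L; nra.
Qed.
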